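(* Let $D$ be a finite directed graph that is essentially a tree, with at least two vertices, and let $v$ be a leaf of $D$, i.e. there is a unique vertex $x$ such that every edge of $D$ incident to $v$ is $\overrightarrow{vx}$ or $\overrightarrow{xv}$ (at least one of these is in $E(D)$). Let $D'=D\setminus\{v\}$ (delete $v$ and its incident edges), let $y_1,\ldots,y_k$ be the vertices $y$ of $D'$ with $\overrightarrow{yx}\in E(D')$, indexed so that $\overrightarrow{xy_i}\in E(D)$ exactly for $i=1,\ldots,s$ ($0\le s\le k$). Let $D_0=D'\setminus\{\overrightarrow{y_1x},\ldots,\overrightarrow{y_kx}\}$ and, for $p=1,\ldots,k$, let $D_p=D_0\setminus\{\overrightarrow{xy_p}\}$ (so $D_p=D_0$ for $p>s$). Let $F_1,\ldots,F_t$ be a shelling order of $\Delta(D')$, $H_1,\ldots,H_q$ a shelling order of $\Delta(D_0)$, and for each $p$ let $G^p_1,\ldots,G^p_{t_p}$ be a shelling order of $\Delta(D_p)$. Then: (a) If $\overrightarrow{xv}\in E(D)$ and $\overrightarrow{vx}\notin E(D)$, then $F_1\cup\{\overrightarrow{xv}\},\ldots,F_t\cup\{\overrightarrow{xv}\}$ is a shelling order of $\Delta(D)$, and $h_{i,j}(\Delta(D))=h_{i-1,j}(\Delta(D'))$ for all $i,j$. (b) If $\overrightarrow{xv}\notin E(D)$ and $\overrightarrow{vx}\in E(D)$, then $$H_1\cup\{\overrightarrow{vx}\},\ldots,H_q\cup\{\overrightarrow{vx}\},G^1_1\cup\{\overrightarrow{y_1x}\},\ldots,G^1_{t_1}\cup\{\overrightarrow{y_1x}\},\ldots,G^k_1\cup\{\overrightarrow{y_kx}\},\ldots,G^k_{t_k}\cup\{\overrightarrow{y_kx}\}$$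 is a shelling order of $\Delta(D)$, and $h_{i,j}(\Delta(D))=h_{i-1,j}(\Delta(D_0))+\sum_{p=1}^k h_{i-1,j-1}(\Delta(D_p))$. (c) If $\overrightarrow{xv},\overrightarrow{vx}\in E(D)$, then $$F_1\cup\{\overrightarrow{xv}\},\ldots,F_t\cup\{\overrightarrow{xv}\},H_1\cup\{\overrightarrow{vx}\},\ldots,H_q\cup\{\overrightarrow{vx}\}$$ is a shelling order of $\Delta(D)$, and $h_{i,j}(\Delta(D))=h_{i-1,j}(\Delta(D'))+h_{i-1,j-1}(\Delta(D_0))$.
   Context: For a finite directed graph $D$ (no loops, no multiple edges), $\Delta(D)$ has the directed edges of $D$ as vertices and the edge sets of directed forests in $D$ (vertex-disjoint unions of rooted directed trees; equivalently, edge sets in which every vertex has in-degree at most $1$ and there is no directed cycle) as faces. $D$ is essentially a tree if replacing every directed edge, or pair of opposite directed edges, by one undirected edge yields a tree. A (possibly nonpure) complex is shellable with shelling order $F_1,\ldots,F_k$ of its facets if for all $i<j$ there exist $l<j$ and $v\in F_j$ with $F_i\cap F_j\subseteq F_l\cap F_j=F_j\setminus\{v\}$. For a complex $\Delta$, $f_{i,j}(\Delta)$ is the number of faces $A$ with $|A|=j$ such that the largest face containing $A$ has $i$ vertices, and the $h$-triangle is $h_{i,j}(\Delta)=\sum_{k=0}^{j}(-1)^{j-k}{i-k\choose j-k}f_{i,k}(\Delta)$. *)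

From HB Require Import structures.
From mathcomp Require Import all_boot all_order all_algebra.
Set Implicit Arguments. Unset Strict Implicit. Unset Printing Implicit Defensive.
Import Order.TTheory GRing.Theory Num.Theory.

Section Complex.
Variable T : finType.
Implicit Types (C : {set {set T}}) (A F : {set T}).

Definition facets C : {set {set T}} :=
  [set F in C | [forall G in C, (F \subset G) ==> (G == F)]].

Definition shelling_order C (s : seq {set T}) : Prop :=
  [/\ uniq s,
      (forall F, (F \in s) = (F \in facets C)) &
      (forall i j, i < j -> j < size s ->
         exists l, l < j /\
           exists w, w \in nth set0 s j /\
             (nth set0 s i :&: nth set0 s j) \subset (nth set0 s l :&: nth set0 s j) /\
             nth set0 s l :&: nth set0 s j = nth set0 s j :\ w)].

Definition top_size C A : nat := \max_(F in C | A \subset F) #|F|.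

Definition fT C (i j : nat) : nat :=
  #|[set A in C | (#|A| == j) && (top_size C A == i)]|.

Definition hT_nat C (i j : nat) : int :=
  (\sum_(k < j.+1) (-1) ^+ (j - k) * ('C(i - k, j - k))%:Z * (fT C i k)%:Z)%R.

Definition hT C (i j : int) : int :=
  match i, j with
  | Posz a, Posz b => hT_nat C a b
  | _, _ => 0%R
  end.
End Complex.

Section Digraph.
Variable V : finType.
Implicit Types (W : {set V}) (E A : {set V * V}).

Definition dforest A : bool :=
  [forall w : V, #|[set e in A | e.2 == w]| <= 1] &&
  [forall e in A, ~~ connect [rel a b | (a, b) \in A] e.2 e.1].

Definition Delta E : {set {set V * V}} := [set A : {set V * V} | (A \subset E) && dforest A].

Definition digraph W E : Prop :=
  E \subset setX W W /\ forall a, (a, a) \notin E.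

Definition uedges E : {set {set V}} := [set [set e.1; e.2] | e in E].
Definition uadj E : rel V := [rel a b | ((a, b) \in E) || ((b, a) \in E)].

Definition ess_tree W E : Prop :=
  [/\ W != set0,
      (forall a b, a \in W -> b \in W -> connect (uadj E) a b) &
      #|uedges E| = #|W| - 1].

Definition del_vertex E (v : V) : {set V * V} :=
  [set e in E | (e.1 != v) && (e.2 != v)].
End Digraph.

(* A forest of D either avoids v, or uses the arc xv (and the rest is a forest of D'),
   or uses vx.  In the last case it has no other arc into x, so either the rest is a
   forest of D_0, or it contains exactly one arc y_p x and the rest is a forest of D_p.
   Conversely all these sets are forests; for y_p x this is because the edge {x, y_p}
   is a bridge of the underlying tree.  Hence Delta(D) is a "cone union"
   A ∪ e*A ∪ ⋃_p e_p*B_p with B_p ⊆ A and fresh distinct apexes e, e_p.  The facets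
   of such a complex are the coned facets, concatenated shellings of the cones shell
   it (a coned facet of B_p meets the cone over a facet of A containing it exactly in
   its base), and coning raises top sizes by one, so
   f_{i,k} = f_{i-1,k}(A) + f_{i-1,k-1}(A) + Σ_p f_{i-1,k-1}(B_p);
   Pascal's rule turns this into the h-triangle recursion. *)
From mathcomp Require Import all_boot all_order all_algebra.
From mathcomp Require Import ring zify.
Set Implicit Arguments. Unset Strict Implicit. Unset Printing Implicit Defensive.
Import Order.TTheory GRing.Theory Num.Theory.

Section SetU1r.
Variable T : finType.
Implicit Types (X Y : {set T}) (t : T).

Lemma subset_setU1r X Y t : X \subset Y :|: [set t] -> t \notin X -> X \subset Y.
Proof.
move=> XY tX; apply/subsetP => z zX; have := subsetP XY z zX.
by rewrite in_setU in_set1; case/orP => // /eqP zt; move: tX; rewrite -zt zX.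
Qed.

Lemma cards_setU1r X t : t \notin X -> #|X :|: [set t]| = #|X|.+1.
Proof. by move=> tX; rewrite setUC cardsU1 tX. Qed.

Lemma setU1r_inj X Y t : t \notin X -> t \notin Y -> X :|: [set t] = Y :|: [set t] -> X = Y.
Proof.
move=> tX tY XY; apply/eqP; rewrite eqEsubset.
by rewrite (subset_setU1r _ tX) -?XY ?subsetUl // (subset_setU1r _ tY) ?XY ?subsetUl.
Qed.

Lemma mem_setU1r X t : t \in X :|: [set t].
Proof. by rewrite in_setU set11 orbT. Qed.

End SetU1r.

Section TopSize.
Variable T : finType.
Implicit Types (K : {set {set T}}) (X F : {set T}).

Lemma top_size_ge K X F : F \in K -> X \subset F -> #|F| <= top_size K X.
Proof.
by move=> FK XF; apply: (@leq_bigmax_cond _ (fun F => (F \in K) && (X \subset F))); rewrite FK.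
Qed.

Lemma top_size_le K X m : (forall F, F \in K -> X \subset F -> #|F| <= m) -> top_size K X <= m.
Proof. by move=> H; apply/bigmax_leqP => F /andP[]; apply: H. Qed.

Lemma top_sizeP K X : X \in K -> exists2 F, (F \in K) && (X \subset F) & top_size K X = #|F|.
Proof.
move=> XK; have : 0 < #|[pred F | (F \in K) && (X \subset F)]|.
  by apply/card_gt0P; exists X; rewrite inE XK subxx.
by case/(eq_bigmax_cond (fun F : {set T} => #|F|)) => F FK topF; exists F.
Qed.

Lemma card_le_top_size K X : X \in K -> #|X| <= top_size K X.
Proof. by move=> XK; apply: top_size_ge. Qed.

Lemma facetP K X :
  reflect (X \in K /\ forall G, G \in K -> X \subset G -> G = X) (X \in facets K).
Proof.
rewrite inE; apply: (iffP andP) => [[XK /forall_inP maxX]|[XK maxX]]; split => //.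
  by move=> G GK XG; apply/eqP; move: (maxX G GK); rewrite XG.
by apply/forall_inP => G GK; apply/implyP => /(maxX G GK) ->.
Qed.

Lemma facet_mem K X : X \in facets K -> X \in K.
Proof. by case/facetP. Qed.

Lemma facet_above K X : X \in K -> exists2 F, F \in facets K & X \subset F.
Proof.
move=> XK; have [F /andP[FK XF] topF] := top_sizeP XK.
exists F => //; apply/facetP; split => // G GK FG.
apply/eqP; rewrite eq_sym eqEcard FG -topF top_size_ge //.
exact: subset_trans XF FG.
Qed.

Lemma fTE K i k : fT K i k = \sum_(X in K) ((#|X| == k) && (top_size K X == i) : nat).
Proof.
rewrite /fT -sum1_card [LHS]big_mkcond [RHS]big_mkcond /=; apply: eq_bigr => X _.
by rewrite inE; case: (X \in K).
Qed.

Lemma fT_eq0 K i k : i < k -> fT K i k = 0.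
Proof.
move=> ik; rewrite fTE big1 // => X XK.
case: eqP => // cardX; case: eqP => // topX; move: (card_le_top_size XK).
by rewrite cardX topX leqNgt ik.
Qed.

End TopSize.

Section HTriangle.
Local Open Scope ring_scope.

Lemma alternating_sum_binS (i m : nat) (g : nat -> nat) : (forall k, (i < k)%N -> g k = 0%N) ->
  \sum_(k < m.+2) (-1) ^+ (m.+1 - k) * ('C(i.+1 - k, m.+1 - k))%:Z * (g k)%:Z +
  \sum_(k < m.+1) (-1) ^+ (m - k) * ('C(i - k, m - k))%:Z * (g k)%:Z =
  \sum_(k < m.+2) (-1) ^+ (m.+1 - k) * ('C(i - k, m.+1 - k))%:Z * (g k)%:Z :> int.
Proof.
move=> g_gt; rewrite big_ord_recr [in RHS]big_ord_recr /= !subnn !bin0.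
rewrite addrAC; congr (_ + _); rewrite -big_split /=; apply: eq_bigr => k _ /=.
have km : (k <= m)%N by rewrite -ltnS.
rewrite (subSn km) exprS.
have [ik|ki] := ltnP i k; first by rewrite g_gt // !mulr0 addr0.
rewrite (subSn ki) binS PoszD; ring.
Qed.

Variables (T : finType) (I : eqType) (C A : {set {set T}}).
Variables (ys : seq I) (B : I -> {set {set T}}).
Hypothesis fT_C0 : forall k, fT C 0 k = 0%N.
Hypothesis fT_CS : forall i k, fT C i.+1 k =
  (fT A i k + if k is k'.+1 then fT A i k' + \sum_(y <- ys) fT (B y) i k' else 0)%N.

Lemma hT_nat_succ i j : hT_nat C i.+1 j =
  hT_nat A i j + if j is j'.+1 then \sum_(y <- ys) hT_nat (B y) i j' else 0.
Proof.
rewrite /hT_nat.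
rewrite (eq_bigr (fun k : 'I_j.+1 => (-1) ^+ (j - k) * ('C(i.+1 - k, j - k))%:Z * (fT A i k)%:Z +
   (-1) ^+ (j - k) * ('C(i.+1 - k, j - k))%:Z *
   (if (k : nat) is k'.+1 then (fT A i k')%:Z + \sum_(y <- ys) (fT (B y) i k')%:Z else 0)));
  last first.
  move=> k _; rewrite fT_CS PoszD mulrDr; congr (_ + _); case: (nat_of_ord k) => // k'.
  rewrite PoszD; congr (_ * (_ + _)).
  by elim: ys => [|y r IH]; rewrite ?big_nil // !big_cons PoszD IH.
rewrite big_split /= [in X in _ + X = _]big_ord_recl /= mulr0 add0r.
case: j => [|m]; first by rewrite big_ord0 !addr0 !big_ord1 /= !subn0 !bin0.
rewrite (eq_bigr (fun k : 'I_m.+1 => (-1) ^+ (m - k) * ('C(i - k, m - k))%:Z * (fT A i k)%:Z +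
   \sum_(y <- ys) (-1) ^+ (m - k) * ('C(i - k, m - k))%:Z * (fT (B y) i k)%:Z)); last first.
  move=> k _; rewrite /bump /= !add0n !add1n !subSS mulrDr mulr_sumr.
  by congr (_ + _); apply: eq_bigr => y _; rewrite mulrA.
rewrite big_split /= addrA alternating_sum_binS; last by move=> k; apply: fT_eq0.
by rewrite exchange_big.
Qed.

Lemma hT_succ (i j : int) : hT C i j = hT A (i - 1) j + \sum_(y <- ys) hT (B y) (i - 1) (j - 1).
Proof.
have hT_neg (K : {set {set T}}) (a b : int) : b < 0 -> hT K a b = 0 by case: a; case: b.
have [j_neg|] := ltrP j 0.
  rewrite !hT_neg ?add0r ?big1_seq // => y _; rewrite hT_neg //.
  by apply: lt_trans j_neg; rewrite gtrDl.
case: j => [m _|//].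
case: i => [[|n]|n]; last by rewrite [hT C _ _]/= big1_seq.
  rewrite /= /hT_nat big1 ?add0r ?big1_seq // => k _.
  by rewrite fT_C0 mulr0.
have predS (p : nat) : Posz p.+1 - 1 = Posz p by rewrite -addn1 PoszD addrK.
rewrite predS /= hT_nat_succ; congr (_ + _).
case: m => [|m]; first by rewrite big1_seq.
by rewrite predS.
Qed.

End HTriangle.

Lemma disjointP (U : finType) (A B : {pred U}) :
  reflect (forall x, x \in A -> x \in B -> False) [disjoint A & B].
Proof.
rewrite disjoint_subset; apply: (iffP subsetP) => [AB x xA xB|AB x xA].
  by move: (AB x xA); rewrite inE xB.
by rewrite inE; apply/negP => xB; apply: AB xA xB.
Qed.

Lemma sum_setU_disjoint (U : finType) (A B : {set U}) (g : U -> nat) : [disjoint A & B] ->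
  \sum_(X in A :|: B) g X = \sum_(X in A) g X + \sum_(X in B) g X.
Proof. by move=> AB; rewrite -bigU //; apply: eq_bigl => X; rewrite in_setU. Qed.

Lemma mem_bigcup_seq (U : finType) (I : eqType) (ys : seq I) (S : I -> {set U}) X :
  (X \in \bigcup_(y <- ys) S y) = has (fun y => X \in S y) ys.
Proof. by elim: ys => [|y ys IH]; rewrite ?big_nil ?in_set0 // big_cons in_setU IH. Qed.

Lemma sum_bigcup_seq_disjoint (U : finType) (I : eqType) (zs : seq I) (S : I -> {set U})
    (g : U -> nat) :
  uniq zs -> {in zs &, forall z z', z != z' -> [disjoint S z & S z']} ->
  \sum_(X in \bigcup_(z <- zs) S z) g X = \sum_(z <- zs) \sum_(X in S z) g X.
Proof.
elim: zs => [|z zs IH] /=; first by rewrite big_nil big_set0 big_nil.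
case/andP=> zs_z zs_uniq disjS; rewrite big_cons sum_setU_disjoint ?big_cons ?IH //.
  by move=> a b az bz; apply: disjS; rewrite inE ?az ?bz orbT.
apply/disjointP => X XS; rewrite mem_bigcup_seq => /hasP[z' z'zs XS'].
have /disjointP : [disjoint S z & S z'].
  by apply: disjS; rewrite ?inE ?eqxx ?z'zs ?orbT //; apply: contraNneq zs_z => ->.
by move/(_ X XS XS').
Qed.

Definition cone (T : finType) (t : T) (K : {set {set T}}) : {set {set T}} :=
  [set k :|: [set t] | k in K].

Section ShellingExtension.
Variable T : finType.
Implicit Types (C : {set {set T}}) (prev s t : seq {set T}) (F G H : {set T}).

Definition shelling_step prev F :=
  forall G, G \in prev -> exists2 H, H \in prev &
    exists2 w, w \in F & G :&: F \subset H :&: F /\ H :&: F = F :\ w.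

Definition shelling_ext prev t :=
  forall n, n < size t -> shelling_step (prev ++ take n t) (nth set0 t n).

Lemma shelling_orderP C s :
  shelling_order C s <-> [/\ uniq s, s =i facets C & shelling_ext [::] s].
Proof.
have take_size n : n < size s -> size (take n s) = n by move=> ns; rewrite size_takel // ltnW.
have index_take n G : G \in take n s -> index G (take n s) < n.
  by move=> Gs; rewrite (leq_trans _ (geq_minl n (size s))) // -size_take_min index_mem.
have nth_index_take n G : G \in take n s -> nth set0 s (index G (take n s)) = G.
  by move=> Gs; rewrite -(nth_take set0 (index_take n G Gs)) nth_index.
split=> [[s_uniq s_facets sh]|[s_uniq s_facets sh]]; split=> //.
  move=> n ns G /= Gs; have [l [ln [w [wF [GH Hw]]]]] := sh _ _ (index_take n G Gs) ns.
  exists (nth set0 s l); first by rewrite -(nth_take set0 ln) mem_nth ?take_size.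
  by exists w => //; rewrite -(nth_index_take n G).
move=> i j ij js; have Gs : nth set0 s i \in [::] ++ take j s.
  by rewrite /= -(nth_take set0 ij) mem_nth ?take_size.
have [H Hs [w wF [GH Hw]]] := sh j js _ Gs.
by exists (index H (take j s)); split; [apply: index_take | exists w; rewrite nth_index_take].
Qed.

Lemma shelling_ext_cat prev t u :
  shelling_ext prev t -> shelling_ext (prev ++ t) u -> shelling_ext prev (t ++ u).
Proof.
move=> sh_t sh_u n; rewrite size_cat take_cat nth_cat => n_tu.
case: ltnP => [n_t|t_n]; first exact: sh_t.
rewrite catA; apply: sh_u.
by rewrite -(ltn_add2l (size t)) subnKC.
Qed.

Lemma shelling_ext_cone prev sB f :
  shelling_ext [::] sB -> (forall b, b \in sB -> f \notin b) ->
  (forall G, G \in prev -> f \notin G) ->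
  (forall b G, b \in sB -> G \in prev -> exists2 H, H \in prev & H :&: (b :|: [set f]) = b) ->
  shelling_ext prev [seq b :|: [set f] | b <- sB].
Proof.
move=> sh_B f_B f_prev below n; rewrite size_map => ns G; rewrite (nth_map set0) // -map_take.
have bn := mem_nth set0 ns; rewrite mem_cat => /orP[Gp|/mapP[g gB ->]].
  have [H Hp Hb] := below _ _ bn Gp; exists H; first by rewrite mem_cat Hp.
  exists f; first exact: mem_setU1r; rewrite Hb; split.
    apply/subsetP => z; rewrite !inE => /andP[zG /orP[//|/eqP zf]].
    by move: (f_prev _ Gp); rewrite -zf zG.
  by rewrite setDUl setDv setU0; apply/esym/setDidPl; rewrite disjoint_sym disjoints1 f_B.
have [H Hin [w wb [gH Hw]]] := sh_B n ns g gB.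
exists (H :|: [set f]); first by rewrite mem_cat (map_f (fun b => b :|: [set f]) Hin) orbT.
have wf : w != f by apply: contraNneq (f_B _ bn) => <-.
exists w; first by rewrite in_setU wb.
rewrite -!setUIl; split; first exact: setSU.
rewrite Hw; apply/setP => z; rewrite !inE; case: (z =P f) => [->|]; first by rewrite eq_sym wf.
by rewrite !orbF.
Qed.

End ShellingExtension.

Section ConeUnion.
Variables (T : finType) (I : eqType).
Variables (A : {set {set T}}) (e : T) (ys : seq I) (ep : I -> T) (B : I -> {set {set T}}).
Hypothesis ys_uniq : uniq ys.
Hypothesis ep_inj : injective ep.
Hypothesis ep_neq : forall y, y \in ys -> ep y != e.
Hypothesis e_notin : forall a, a \in A -> e \notin a.
Hypothesis ep_notin : forall y a, y \in ys -> a \in A -> ep y \notin a.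
Hypothesis B_sub : forall y, y \in ys -> B y \subset A.

Definition cone_union := A :|: cone e A :|: \bigcup_(y <- ys) cone (ep y) (B y).
Local Notation C := cone_union.

Lemma B_mem y b : y \in ys -> b \in B y -> b \in A.
Proof. by move=> yys /(subsetP (B_sub yys)). Qed.

Lemma base_mem a : a \in A -> a \in C.
Proof. by move=> aA; rewrite !in_setU aA. Qed.

Lemma cone_mem a : a \in A -> a :|: [set e] \in C.
Proof. by move=> aA; rewrite !in_setU (imset_f (fun k => k :|: [set e]) aA) orbT. Qed.

Lemma side_cone_mem y b : y \in ys -> b \in B y -> b :|: [set ep y] \in C.
Proof.
move=> yys bB; rewrite in_setU mem_bigcup_seq; apply/orP; right; apply/hasP.
by exists y; rewrite ?(imset_f (fun k => k :|: [set ep y]) bB).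
Qed.

Lemma cone_unionP X : X \in C ->
  [\/ X \in A, exists2 a, a \in A & X = a :|: [set e] |
      exists2 y, y \in ys & exists2 b, b \in B y & X = b :|: [set ep y]].
Proof.
rewrite !in_setU mem_bigcup_seq -orbA => /or3P[XA|/imsetP[a aA ->]|/hasP[y yys /imsetP[b bB ->]]].
- by constructor 1.
- by constructor 2; exists a.
- by constructor 3; exists y => //; exists b.
Qed.

Lemma ep_mem_side_cone y y' b : y \in ys -> y' \in ys -> b \in B y' ->
  ep y \in b :|: [set ep y'] -> y = y'.
Proof.
move=> yys y'ys bB; rewrite in_setU (negbTE (ep_notin yys (B_mem y'ys bB))) in_set1.
by move/eqP/ep_inj.
Qed.

Lemma e_notin_side_cone y b : y \in ys -> b \in B y -> e \notin b :|: [set ep y].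
Proof.
move=> yys bB; rewrite in_setU in_set1 eq_sym negb_or (ep_neq yys) andbT.
exact/e_notin/(B_mem yys).
Qed.

Lemma top_size_base a : a \in A -> top_size C a = (top_size A a).+1.
Proof.
move=> aA; apply/eqP; rewrite eqn_leq; apply/andP; split.
  apply: top_size_le => F /cone_unionP[FA|[a' a'A ->]|[y yys [b bB ->]]] aF.
  - exact: leq_trans (top_size_ge FA aF) _.
  - by rewrite cards_setU1r ?e_notin // ltnS top_size_ge // (subset_setU1r aF) ?e_notin.
  - have bA := B_mem yys bB.
    by rewrite cards_setU1r ?ep_notin // ltnS top_size_ge // (subset_setU1r aF) ?ep_notin.
have [F /andP[FA aF] ->] := top_sizeP aA.
rewrite -(cards_setU1r (e_notin FA)) top_size_ge ?cone_mem //.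
exact: subset_trans aF (subsetUl _ _).
Qed.

Lemma top_size_cone a : a \in A -> top_size C (a :|: [set e]) = (top_size A a).+1.
Proof.
move=> aA; apply/eqP; rewrite eqn_leq; apply/andP; split.
  apply: top_size_le => F /cone_unionP[FA|[a' a'A ->]|[y yys [b bB ->]]] aF.
  - by move: (e_notin FA); rewrite (subsetP aF) ?mem_setU1r.
  - rewrite cards_setU1r ?e_notin // ltnS top_size_ge // (subset_setU1r _ (e_notin aA)) //.
    exact: subset_trans (subsetUl _ _) aF.
  - by move: (e_notin_side_cone yys bB); rewrite (subsetP aF) ?mem_setU1r.
have [F /andP[FA aF] ->] := top_sizeP aA.
by rewrite -(cards_setU1r (e_notin FA)) top_size_ge ?cone_mem ?setSU.
Qed.

Lemma top_size_side_cone y b : y \in ys -> b \in B y ->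
  top_size C (b :|: [set ep y]) = (top_size (B y) b).+1.
Proof.
move=> yys bB; have bA := B_mem yys bB.
apply/eqP; rewrite eqn_leq; apply/andP; split.
  apply: top_size_le => F /cone_unionP[FA|[a aA ->]|[y' y'ys [b' b'B ->]]] bF.
  - by move: (ep_notin yys FA); rewrite (subsetP bF) ?mem_setU1r.
  - have := subsetP bF (ep y) (mem_setU1r _ _).
    by rewrite in_setU in_set1 (negbTE (ep_neq yys)) orbF (negbTE (ep_notin yys aA)).
  - have eyy' := ep_mem_side_cone yys y'ys b'B (subsetP bF _ (mem_setU1r _ _)); subst y'.
    rewrite cards_setU1r ?(ep_notin yys) ?(B_mem yys) // ltnS top_size_ge //.
    by rewrite (subset_setU1r _ (ep_notin yys bA)) // (subset_trans (subsetUl _ _) bF).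
have [F /andP[FB bF] ->] := top_sizeP bB.
by rewrite -(cards_setU1r (ep_notin yys (B_mem yys FB))) top_size_ge ?side_cone_mem ?setSU.
Qed.

Lemma sum_cone_union (g : {set T} -> nat) : \sum_(X in C) g X =
  \sum_(a in A) g a + \sum_(a in A) g (a :|: [set e]) +
  \sum_(y <- ys) \sum_(b in B y) g (b :|: [set ep y]).
Proof.
rewrite /cone_union sum_setU_disjoint; last first.
  apply/disjointP => X; rewrite in_setU mem_bigcup_seq => XAe /hasP[y yys /imsetP[b bB eX]].
  case/orP: XAe => [XA|/imsetP[a aA eX']].
    by move: (ep_notin yys XA); rewrite eX mem_setU1r.
  by move: (e_notin_side_cone yys bB); rewrite -eX eX' mem_setU1r.
rewrite sum_setU_disjoint; last first.
  by apply/disjointP => X XA /imsetP[a aA eX]; move: (e_notin XA); rewrite eX mem_setU1r.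
rewrite sum_bigcup_seq_disjoint //; last first.
  move=> y y' yys y'ys yy'; apply/disjointP => X /imsetP[b bB ->] /imsetP[b' b'B eX].
  by move: yy'; rewrite (ep_mem_side_cone yys y'ys b'B) ?eqxx // -eX mem_setU1r.
rewrite big_imset; last by move=> a a' aA a'A; apply: setU1r_inj; apply: e_notin.
congr (_ + _); apply: eq_big_seq => y yys; rewrite big_imset //.
by move=> b b' bB b'B; apply: setU1r_inj; apply: (ep_notin yys); apply: (B_mem yys).
Qed.

Lemma fT_cone_union i k : fT C i k =
  \sum_(a in A) ((#|a| == k) && ((top_size A a).+1 == i) : nat) +
  \sum_(a in A) ((#|a|.+1 == k) && ((top_size A a).+1 == i) : nat) +
  \sum_(y <- ys) \sum_(b in B y) ((#|b|.+1 == k) && ((top_size (B y) b).+1 == i) : nat).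
Proof.
rewrite fTE sum_cone_union; congr (_ + _ + _).
- by apply: eq_bigr => a aA; rewrite top_size_base.
- by apply: eq_bigr => a aA; rewrite top_size_cone // cards_setU1r ?e_notin.
apply: eq_big_seq => y yys; apply: eq_bigr => b bB.
by rewrite top_size_side_cone // cards_setU1r ?(ep_notin yys) ?(B_mem yys).
Qed.

Lemma fT_cone_union0 k : fT C 0 k = 0.
Proof. by rewrite fT_cone_union !big1 ?big1_seq // => *; rewrite ?big1 // => *; rewrite andbF. Qed.

Lemma fT_cone_unionS i k : fT C i.+1 k =
  fT A i k + if k is k'.+1 then fT A i k' + \sum_(y <- ys) fT (B y) i k' else 0.
Proof.
rewrite fT_cone_union -addnA fTE; congr (_ + _).
case: k => [|k]; first by rewrite big1 // add0n big1_seq // => y _; apply: big1.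
by rewrite fTE; congr (_ + _); apply: eq_big_seq => y yys; rewrite fTE.
Qed.

Lemma facets_cone_union :
  facets C = cone e (facets A) :|: \bigcup_(y <- ys) cone (ep y) (facets (B y)).
Proof.
apply/setP => F; rewrite in_setU mem_bigcup_seq; apply/idP/idP.
  case/facetP => FC; case/cone_unionP: (FC) => [FA|[a aA ->]|[y yys [b bB ->]]] maxF.
  - by move: (e_notin FA); rewrite -(maxF _ (cone_mem FA) (subsetUl _ _)) mem_setU1r.
  - apply/orP; left; apply: imset_f; apply/facetP; split => // G GA aG.
    apply: setU1r_inj (e_notin GA) (e_notin aA) _.
    exact: maxF _ (cone_mem GA) (setSU _ aG).
  - apply/orP; right; apply/hasP; exists y => //; apply: imset_f; apply/facetP.
    split => // G GB bG.
    apply: setU1r_inj (ep_notin yys (B_mem yys GB)) (ep_notin yys (B_mem yys bB)) _.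
    exact: maxF _ (side_cone_mem yys GB) (setSU _ bG).
case/orP=> [/imsetP[a /facetP[aA maxa] ->]|/hasP[y yys /imsetP[b /facetP[bB maxb] ->]]].
  apply/facetP; split; first exact: cone_mem.
  move=> G /cone_unionP[GA|[a' a'A ->]|[y yys [b bB ->]]] aG.
  - by move: (e_notin GA); rewrite (subsetP aG) ?mem_setU1r.
  - by rewrite (maxa a' a'A) // (subset_setU1r _ (e_notin aA)) // (subset_trans (subsetUl _ _) aG).
  - by move: (e_notin_side_cone yys bB); rewrite (subsetP aG) ?mem_setU1r.
apply/facetP; split; first exact: side_cone_mem.
have bA := B_mem yys bB.
move=> G /cone_unionP[GA|[a aA ->]|[y' y'ys [b' b'B ->]]] bG.
- by move: (ep_notin yys GA); rewrite (subsetP bG) ?mem_setU1r.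
- have := subsetP bG (ep y) (mem_setU1r _ _).
  by rewrite in_setU in_set1 (negbTE (ep_neq yys)) orbF (negbTE (ep_notin yys aA)).
- have eyy' := ep_mem_side_cone yys y'ys b'B (subsetP bG _ (mem_setU1r _ _)); subst y'.
  rewrite (maxb b' b'B) // (subset_setU1r _ (ep_notin yys bA)) //.
  exact: subset_trans (subsetUl _ _) bG.
Qed.

Lemma coned_facet_above y b : y \in ys -> b \in A ->
  exists2 a, a \in facets A & (a :|: [set e]) :&: (b :|: [set ep y]) = b.
Proof.
move=> yys bA; have [a aF ba] := facet_above bA; exists a => //.
have aA := facet_mem aF; apply/setP => z; rewrite !inE.
case: (z =P ep y) => [->|_].
  by rewrite (negbTE (ep_notin yys aA)) (negbTE (ep_neq yys)) (negbTE (ep_notin yys bA)).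
rewrite orbF; case: (z =P e) => [->|_]; first by rewrite (negbTE (e_notin bA)) andbF.
by rewrite orbF; apply/andP/idP => [[]//|zb]; rewrite (subsetP ba).
Qed.

Variables (sA : seq {set T}) (sB : I -> seq {set T}).
Hypothesis sA_shelling : shelling_order A sA.
Hypothesis sB_shelling : forall y, y \in ys -> shelling_order (B y) (sB y).

Definition side_cones_shelling (zs : seq I) :=
  flatten [seq [seq b :|: [set ep y] | b <- sB y] | y <- zs].

Definition cone_union_shelling :=
  [seq a :|: [set e] | a <- sA] ++ side_cones_shelling ys.

Lemma sA_mem a : a \in sA -> a \in A.
Proof. by case: sA_shelling => _ -> _ /facet_mem. Qed.

Lemma sB_facet y b : y \in ys -> b \in sB y -> b \in B y.
Proof. by move=> yys; case: (sB_shelling yys) => _ -> _ /facet_mem. Qed.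

Lemma sB_mem y b : y \in ys -> b \in sB y -> b \in A.
Proof. by move=> yys /(sB_facet yys)/(B_mem yys). Qed.

Lemma mem_cone_union_shelling F :
  (F \in cone_union_shelling) = (F \in facets C).
Proof.
rewrite facets_cone_union mem_cat in_setU mem_bigcup_seq; congr (_ || _).
  case: sA_shelling => _ sA_facets _; apply/mapP/imsetP => -[a aA ->];
    by exists a; rewrite // ?sA_facets // -sA_facets.
apply/flattenP/hasP => [[t /mapP[y yys ->] /mapP[b bB ->]]|[y yys /imsetP[b bB ->]]].
  by case: (sB_shelling yys) => _ sB_facets _; exists y => //; apply: imset_f; rewrite -sB_facets.
exists [seq b :|: [set ep y] | b <- sB y]; first exact: map_f.
by case: (sB_shelling yys) => _ sB_facets _; apply: map_f; rewrite sB_facets.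
Qed.

Lemma side_cones_shelling_uniq zs : uniq zs -> {subset zs <= ys} ->
  uniq (side_cones_shelling zs).
Proof.
elim: zs => [|z zs IH] //= /andP[z_zs zs_uniq] zs_ys.
have zys : z \in ys by apply: zs_ys; rewrite inE eqxx.
rewrite /side_cones_shelling /= -/(side_cones_shelling zs) cat_uniq IH ?andbT //; last first.
  by move=> y yzs; apply: zs_ys; rewrite inE yzs orbT.
apply/andP; split.
  rewrite map_inj_in_uniq; first by case: (sB_shelling zys).
  by move=> b b' bB b'B; apply: setU1r_inj; apply: (ep_notin zys); apply: (sB_mem zys).
apply/hasP => -[F /flattenP[t /mapP[y yzs ->] /mapP[b' b'B ->]] /mapP[b bB eF]].
have yys : y \in ys by apply: zs_ys; rewrite inE yzs orbT.
have : ep z \in b' :|: [set ep y] by rewrite eF mem_setU1r.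
rewrite in_setU (negbTE (ep_notin zys (sB_mem yys b'B))) in_set1 => /eqP/ep_inj ezy.
by move: z_zs; rewrite ezy yzs.
Qed.

Lemma shelling_ext_side_cones zs (prev : seq {set T}) : uniq zs -> {subset zs <= ys} ->
  (forall y G, y \in zs -> G \in prev -> ep y \notin G) ->
  (forall y b, y \in zs -> b \in sB y ->
     exists2 H : {set T}, H \in prev & H :&: (b :|: [set ep y]) = b) ->
  shelling_ext prev (side_cones_shelling zs).
Proof.
elim: zs prev => [|z zs IH] prev; first by move=> _ _ _ _ n.
case/andP=> z_zs zs_uniq zs_ys ep_prev below.
have zys : z \in ys by apply: zs_ys; rewrite inE eqxx.
rewrite /side_cones_shelling /= -/(side_cones_shelling zs); apply: shelling_ext_cat.
  apply: shelling_ext_cone.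
  - by case/shelling_orderP: (sB_shelling zys).
  - by move=> b bB; apply: (ep_notin zys); apply: (sB_mem zys).
  - by move=> G; apply: ep_prev; rewrite inE eqxx.
  - by move=> b G bB _; apply: below => //; rewrite inE eqxx.
apply: IH => // [y yzs|y G yzs|y b yzs bB].
- by apply: zs_ys; rewrite inE yzs orbT.
- have yys : y \in ys by apply: zs_ys; rewrite inE yzs orbT.
  rewrite mem_cat => /orP[Gp|/mapP[b bB ->]]; first by apply: ep_prev => //; rewrite inE yzs orbT.
  rewrite in_setU in_set1 (negbTE (ep_notin yys (sB_mem zys bB))) /=.
  by apply: contraNneq z_zs => /ep_inj <-.
- have [|H Hp Hb] := below y b _ bB; first by rewrite inE yzs orbT.
  by exists H; rewrite // mem_cat Hp.
Qed.

Lemma shelling_cone_union : shelling_order C cone_union_shelling.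
Proof.
have sA_facets : sA =i facets A by case: sA_shelling.
apply/shelling_orderP; split.
- rewrite cat_uniq side_cones_shelling_uniq // andbT; apply/andP; split.
    rewrite map_inj_in_uniq; first by case: sA_shelling.
    by move=> a a' aA a'A; apply: setU1r_inj; apply: e_notin; apply: sA_mem.
  apply/hasP => -[F /flattenP[t /mapP[y yys ->] /mapP[b bB ->]] /mapP[a aA eF]].
  by move: (e_notin_side_cone yys (sB_facet yys bB)); rewrite eF mem_setU1r.
- exact: mem_cone_union_shelling.
apply: shelling_ext_cat.
  apply: shelling_ext_cone => //; first by case/shelling_orderP: sA_shelling.
  by move=> a aA; apply/e_notin/sA_mem.
apply: shelling_ext_side_cones => // [y G yys /mapP[a aA ->]|y b yys bB].
  by rewrite in_setU in_set1 negb_or (ep_notin yys (sA_mem aA)) ep_neq.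
have [a aF ab] := coned_facet_above yys (sB_mem yys bB).
by exists (a :|: [set e]) => //; apply: map_f; rewrite sA_facets.
Qed.

Lemma cone_union_shelling_hT :
  shelling_order C cone_union_shelling /\
  forall i j : int, hT C i j = (hT A (i - 1) j + \sum_(y <- ys) hT (B y) (i - 1) (j - 1))%R.
Proof.
split; first exact: shelling_cone_union.
by apply: hT_succ; [apply: fT_cone_union0 | apply: fT_cone_unionS].
Qed.

End ConeUnion.

Lemma eq_cone_union (T : finType) (I : eqType) (C A : {set {set T}}) (e : T) (ys : seq I)
    (ep : I -> T) (B : I -> {set {set T}}) :
  (forall X, X \in C -> [\/ X \in A, e \in X /\ X :\ e \in A |
     exists2 y, y \in ys & ep y \in X /\ X :\ ep y \in B y]) ->
  {subset A <= C} ->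
  (forall a, a \in A -> a :|: [set e] \in C) ->
  (forall y b, y \in ys -> b \in B y -> b :|: [set ep y] \in C) ->
  C = cone_union A e ys ep B.
Proof.
move=> C_cases AC coneC sideC; apply/setP => X; apply/idP/idP.
  case/C_cases => [XA|[eX XA]|[y yys [eyX XB]]]; first exact: base_mem.
    by rewrite -(setD1K eX) setUC cone_mem.
  by rewrite -(setD1K eyX) setUC side_cone_mem.
by case/cone_unionP => [/AC|[a aA ->]|[y yys [b bB ->]]]; [|apply: coneC|apply: sideC].
Qed.

Lemma connect_closed_fwd (U : finType) (r : rel U) (P : U -> Prop) u w :
  P u -> (forall a b, P a -> r a b -> P b) -> connect r u w -> P w.
Proof.
move=> Pu closedP /connectP[p pp ->]; elim: p u pp Pu => [|b p IH] u //= /andP[rub pp] Pu.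
exact: IH pp (closedP _ _ Pu rub).
Qed.

Section Forests.
Variable V : finType.
Implicit Types (A X : {set V * V}) (e : V * V) (s t u w z : V).

Definition edge_rel A : rel V := [rel a b | (a, b) \in A].

Lemma dforestS A X : X \subset A -> dforest A -> dforest X.
Proof.
move=> XA /andP[/forallP indeg /forall_inP acyc]; apply/andP; split.
  apply/forallP => w; apply: leq_trans (indeg w); apply: subset_leq_card.
  by apply/subsetP => e; rewrite !inE => /andP[/(subsetP XA) -> ->].
apply/forall_inP => e eX; apply/negP => /(connect_sub _) XA_conn.
have /negP := acyc e (subsetP XA e eX); apply; apply: XA_conn.
by move=> a b /= ab; apply: connect1; apply: (subsetP XA).
Qed.

Lemma dforest_head_inj A e1 e2 : dforest A -> e1 \in A -> e2 \in A -> e1.2 = e2.2 -> e1 = e2.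
Proof.
case/andP=> /forallP /(_ e2.2) /card_le1_eqP indeg _ e1A e2A e12; apply: indeg; rewrite inE.
  by rewrite e2A eqxx.
by rewrite e1A e12 eqxx.
Qed.

Lemma dforest_acyclic A e : dforest A -> e \in A -> ~~ connect (edge_rel A) e.2 e.1.
Proof. by case/andP=> _ /forall_inP; apply. Qed.

Lemma dforest_antisym A a b : (a, b) \in A -> (b, a) \in A -> ~~ dforest A.
Proof.
move=> ab ba; apply/negP => /dforest_acyclic /(_ ab) /=.
by rewrite (connect1 (e := edge_rel A) ba).
Qed.

Lemma connect_setU1_edge X s t u w : connect (edge_rel (X :|: [set (s, t)])) u w ->
  connect (edge_rel X) u w \/ (connect (edge_rel X) u s /\ connect (edge_rel X) t w).
Proof.
pose reach w := connect (edge_rel X) u w \/ (connect (edge_rel X) u s /\ connect (edge_rel X) t w).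
apply: (@connect_closed_fwd _ _ reach); first by left.
move=> a b reach_a; rewrite /edge_rel /= in_setU in_set1 => /orP[ab|/eqP[ea eb]]; last first.
  by subst a b; right; split; [case: reach_a => [|[]] | ].
case: reach_a => [ua|[us ta]]; first by left; apply: connect_trans ua (connect1 _).
by right; split => //; apply: connect_trans ta (connect1 _).
Qed.

Lemma dforest_add_edge X s t : dforest X -> (forall e, e \in X -> e.2 != t) ->
  ~~ connect (edge_rel X) t s -> dforest (X :|: [set (s, t)]).
Proof.
move=> fX t_free nts; apply/andP; split.
  apply/forallP => w; apply/card_le1_eqP => e1 e2; rewrite !inE.
  case/andP=> /orP[e1X|/eqP->] /eqP h1; case/andP=> /orP[e2X|/eqP->] /eqP h2 //.
  - by apply: (dforest_head_inj fX) => //; rewrite h1 h2.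
  - by move: (t_free _ e1X); rewrite h1 -h2 eqxx.
  - by move: (t_free _ e2X); rewrite h2 -h1 eqxx.
apply/forall_inP => e; rewrite in_setU in_set1 => /orP[eX|/eqP->]; apply/negP.
  case/connect_setU1_edge => [|[e2s te1]]; first by apply/negP; apply: dforest_acyclic.
  have ee : edge_rel X e.1 e.2 by rewrite /edge_rel /= -surjective_pairing.
  by move/negP: nts; apply; apply: connect_trans te1 (connect_trans (connect1 ee) e2s).
by case/connect_setU1_edge => [|[]] /=; move/negP: nts.
Qed.

Lemma connect_from_sink X z w :
  (forall e, e \in X -> e.1 != z) -> connect (edge_rel X) z w -> w = z.
Proof.
move=> z_sink; apply: (@connect_closed_fwd _ _ (eq^~ z)) => // a b -> /= zb.
by move: (z_sink _ zb); rewrite eqxx.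
Qed.

Lemma connect_to_source X z u :
  (forall e, e \in X -> e.2 != z) -> connect (edge_rel X) u z -> u = z.
Proof.
move=> z_source uz; apply/eqP; apply: contraT => u_z.
have /eqP // : z != z.
  by apply: (@connect_closed_fwd _ _ (fun w => w != z)) u_z _ uz => a b _ /= ab; apply: z_source ab.
Qed.

End Forests.

Section ConnectedCount.
Variables (V : finType) (W : {set V}) (E : {set V * V}) (r : V).
Hypothesis rW : r \in W.
Hypothesis W_connected : forall w, w \in W -> connect (uadj E) w r.

Definition path_to_root w n :=
  [exists p : n.-tuple V, path (uadj E) w p && (last w p == r)].

Lemma path_to_rootP w n :
  reflect (exists p : seq V, [/\ size p = n, path (uadj E) w p & last w p = r])
          (path_to_root w n).
Proof.
apply: (iffP existsP) => [[p /andP[wp /eqP lp]]|[p [sp wp lp]]].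
  by exists (val p); rewrite size_tuple.
have sp' : size p == n by rewrite sp.
by exists (Tuple sp'); rewrite /= wp lp eqxx.
Qed.

Lemma exists_dist w : exists n, path_to_root w n || ~~ connect (uadj E) w r.
Proof.
case: (boolP (connect (uadj E) w r)) => [/connectP[p wp lp]|_]; last by exists 0; rewrite orbT.
by exists (size p); apply/orP; left; apply/path_to_rootP; exists p.
Qed.

Definition dist w := ex_minn (exists_dist w).

Lemma dist_path w : w \in W -> path_to_root w (dist w).
Proof. by move=> wW; rewrite /dist; case: ex_minnP => m /orP[//|]; rewrite W_connected. Qed.

Lemma dist_min w n : path_to_root w n -> dist w <= n.
Proof. by move=> wn; rewrite /dist; case: ex_minnP => m _; apply; rewrite wn. Qed.

Definition parent w := odflt w [pick u | uadj E w u && (dist u < dist w)].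

Lemma parentP w : w \in W -> w != r -> uadj E w (parent w) && (dist (parent w) < dist w).
Proof.
move=> wW wr; rewrite /parent; case: pickP => [u -> //|no_parent].
have /path_to_rootP[[|u p] [sp /= wp lp]] := dist_path wW; first by rewrite lp eqxx in wr.
case/andP: wp => wu up; move: (no_parent u); rewrite wu /= -sp ltnS dist_min //.
by apply/path_to_rootP; exists p.
Qed.

(* w |-> [set w; parent w] injects W :\ r into the undirected edges, as dist (parent w) < dist w. *)
Lemma card_connected : #|W| <= #|uedges E|.+1.
Proof.
rewrite (cardsD1 r W) rW add1n ltnS.
have -> : #|W :\ r| = #|[set [set w; parent w] | w in W :\ r]|.
  rewrite card_in_imset // => w w'; rewrite !inE => /andP[wr wW] /andP[w'r w'W] ww'.
  have /andP[_ dw] := parentP wW wr; have /andP[_ dw'] := parentP w'W w'r.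
  have : w \in [set w'; parent w'] by rewrite -ww' !inE eqxx.
  have : w' \in [set w; parent w] by rewrite ww' !inE eqxx.
  rewrite !inE => /orP[/eqP->//|/eqP e1] /orP[/eqP->//|/eqP e2].
  by move: dw dw'; rewrite -e1 -e2 => /ltn_trans h /h; rewrite ltnn.
apply: subset_leq_card; apply/subsetP => S /imsetP[w]; rewrite !inE => /andP[wr wW] ->.
have /andP[/orP[wp|pw] _] := parentP wW wr; apply/imsetP; first by exists (w, parent w).
by exists (parent w, w) => //; rewrite setUC.
Qed.

End ConnectedCount.

Lemma set2_eq (V : finType) (a b x y : V) : x != y -> [set a; b] = [set x; y] ->
  (a = x /\ b = y) \/ (a = y /\ b = x).
Proof.
move=> xy e.
have : a \in [set x; y] by rewrite -e !inE eqxx.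
have : b \in [set x; y] by rewrite -e !inE eqxx orbT.
have : x \in [set a; b] by rewrite e !inE eqxx.
have : y \in [set a; b] by rewrite e !inE eqxx orbT.
rewrite !inE.
by do 4 case/orP=> /eqP ?; subst => //; try (by left); try (by right); move: xy; rewrite eqxx.
Qed.

Lemma card_uedges_del (V : finType) (E : {set V * V}) (x y : V) : (y, x) \in E -> x != y ->
  #|uedges (E :\ (x, y) :\ (y, x))| < #|uedges E|.
Proof.
move=> yxE xy; apply: (@leq_ltn_trans #|uedges E :\ [set y; x]|); last first.
  by rewrite (cardsD1 [set y; x] (uedges E)) (imset_f _ yxE).
apply: subset_leq_card; apply/subsetP => S /imsetP[[a b] ab ->] /=.
rewrite !inE in ab; case/andP: ab => ab1 /andP[ab2 abE].
rewrite !inE (imset_f _ abE) andbT; apply/negP => /eqP /set2_eq.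
rewrite eq_sym => /(_ xy) [[ea eb]|[ea eb]]; subst.
  by rewrite eqxx in ab1.
by rewrite eqxx in ab2.
Qed.

(* Otherwise E minus the edge {x, y} would still connect W, with too few edges. *)
Lemma ess_tree_bridge (V : finType) (W : {set V}) (E X : {set V * V}) (x y : V) :
  ess_tree W E -> (y, x) \in E -> x != y -> X \subset E :\ (x, y) :\ (y, x) ->
  ~~ connect (edge_rel X) x y.
Proof.
case=> W0 W_connected cardE yxE xy XE; apply/negP => Xxy.
have := card_uedges_del yxE xy; set E2 := E :\ (x, y) :\ (y, x).
have sym2 : symmetric (uadj E2) by move=> a b; rewrite /uadj /= orbC.
have E2xy : connect (uadj E2) x y.
  by apply: (connect_sub _ Xxy) => a b /= ab; apply: connect1; rewrite /uadj /= (subsetP XE _ ab).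
have E2yx : connect (uadj E2) y x by rewrite (sym_connect_sym sym2).
have W_connected2 a b : a \in W -> b \in W -> connect (uadj E2) a b.
  move=> aW bW; apply: (connect_sub _ (W_connected _ _ aW bW)) => u w /= /orP uw.
  have [/eqP[-> ->]|n1] := boolP ((u, w) == (x, y)); first exact: E2xy.
  have [/eqP[-> ->]|n2] := boolP ((u, w) == (y, x)); first exact: E2yx.
  apply: connect1; rewrite /uadj /E2 /= !inE.
  case: uw => uw; [apply/orP; left | apply/orP; right]; rewrite uw andbT ?n1 ?n2 //.
  by apply/andP; split; [apply: contra n1 | apply: contra n2] => /eqP[-> ->].
have [r rW] := set0Pn _ W0.
have := card_connected rW (fun w wW => W_connected2 w r wW rW).
have : 0 < #|W| by rewrite card_gt0.
lia.
Qed.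

Section DeltaBasics.
Variable V : finType.
Implicit Types (E X : {set V * V}).

Lemma DeltaP E X : reflect (X \subset E /\ dforest X) (X \in Delta E).
Proof. by rewrite inE; apply: andP. Qed.

Lemma Delta_mem E X e : X \in Delta E -> e \in X -> e \in E.
Proof. by case/DeltaP => /subsetP XE _ /XE. Qed.

Lemma DeltaS E1 E2 : E1 \subset E2 -> Delta E1 \subset Delta E2.
Proof.
move=> E12; apply/subsetP => X /DeltaP[XE fX]; apply/DeltaP; split => //.
exact: subset_trans XE E12.
Qed.

End DeltaBasics.

Section Leaf.
Variables (V : finType) (W : {set V}) (E : {set V * V}) (v x : V) (ys : seq V).
Hypothesis no_loop : forall a, (a, a) \notin E.
Hypothesis E_tree : ess_tree W E.
Hypothesis v_leaf : forall e, e \in E -> (e.1 == v) || (e.2 == v) ->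
  (e == (v, x)) || (e == (x, v)).
Hypothesis v_adj : ((v, x) \in E) || ((x, v) \in E).
Hypothesis ys_uniq : uniq ys.
Hypothesis ysP : forall y, (y \in ys) = ((y, x) \in del_vertex E v).

Local Notation E' := (del_vertex E v).
Local Notation E0 := (E' :\: [set (y, x) | y in ys]).

Lemma x_neq_v : x != v.
Proof. by apply: contraTneq v_adj => ->; rewrite (negbTE (no_loop v)). Qed.

Lemma mem_del_vertex e : (e \in E') = [&& e \in E, e.1 != v & e.2 != v].
Proof. by rewrite inE. Qed.

Lemma del_vertex_sub : E' \subset E.
Proof. by apply/subsetP => e; rewrite mem_del_vertex => /andP[]. Qed.

Lemma leaf_edgeP e : e \in E -> [\/ e \in E', e = (v, x) | e = (x, v)].
Proof.
move=> eE; case: (boolP ((e.1 == v) || (e.2 == v))) => [/(v_leaf eE)|].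
  by case/orP => /eqP ->; [constructor 2 | constructor 3].
by rewrite negb_or mem_del_vertex eE => ?; constructor 1.
Qed.

Lemma del_vertex_tail e : e \in E' -> e.1 != v.
Proof. by rewrite mem_del_vertex => /and3P[]. Qed.

Lemma del_vertex_head e : e \in E' -> e.2 != v.
Proof. by rewrite mem_del_vertex => /and3P[]. Qed.

Lemma mem_E0 e : (e \in E0) = (e \in E') && (e.2 != x).
Proof.
rewrite in_setD andbC; case eE': (e \in E') => //=; congr negb.
apply/imsetP/eqP => [[y _ -> //]|ex]; exists e.1; rewrite ?ysP -ex -?surjective_pairing //.
Qed.

Lemma E0_sub : E0 \subset E'.
Proof. by apply/subsetP => e; rewrite mem_E0 => /andP[]. Qed.

Lemma E0_head e : e \in E0 -> e.2 != x.
Proof. by rewrite mem_E0 => /andP[]. Qed.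

Lemma out_cone_Delta a : (x, v) \in E -> a \in Delta E' -> a :|: [set (x, v)] \in Delta E.
Proof.
move=> xvE aD; have /DeltaP[aE' fa] := aD; apply/DeltaP; split.
  by rewrite subUset sub1set xvE (subset_trans aE' del_vertex_sub).
apply: dforest_add_edge fa _ _ => [e /(Delta_mem aD)|]; first exact: del_vertex_head.
apply/negP => /(connect_from_sink (fun e ea => del_vertex_tail (Delta_mem aD ea))) /eqP.
by rewrite (negbTE x_neq_v).
Qed.

Lemma in_cone_Delta b : (v, x) \in E -> b \in Delta E0 -> b :|: [set (v, x)] \in Delta E.
Proof.
move=> vxE bD; have /DeltaP[bE0 fb] := bD; apply/DeltaP; split.
  by rewrite subUset sub1set vxE (subset_trans bE0 (subset_trans E0_sub del_vertex_sub)).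
apply: dforest_add_edge fb _ _ => [e /(Delta_mem bD)|]; first exact: E0_head.
have v_source e : e \in b -> e.2 != v by move/(Delta_mem bD)/(subsetP E0_sub)/del_vertex_head.
by apply/negP => /(connect_to_source v_source) /eqP; rewrite (negbTE x_neq_v).
Qed.

Lemma side_cone_Delta y b : y \in ys -> b \in Delta (E0 :\ (x, y)) ->
  b :|: [set (y, x)] \in Delta E.
Proof.
move=> yys bD; have /DeltaP[bE fb] := bD.
have yxE : (y, x) \in E by move: yys; rewrite ysP => /(subsetP del_vertex_sub).
have bE0 e : e \in b -> e \in E0 by move/(subsetP bE); rewrite inE => /andP[].
apply/DeltaP; split.
  rewrite subUset sub1set yxE andbT; apply/subsetP => e /bE0.
  by move/(subsetP E0_sub)/(subsetP del_vertex_sub).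
apply: dforest_add_edge fb _ _ => [e /bE0|]; first exact: E0_head.
have xy : x != y by apply: contraTneq yxE => ->; apply: no_loop.
apply: (ess_tree_bridge E_tree yxE xy); apply/subsetP => e eb.
have := subsetP bE e eb; rewrite in_setD1 => /andP[exy eE0].
rewrite !in_setD1 exy (subsetP del_vertex_sub _ (subsetP E0_sub _ eE0)) !andbT.
by apply: contraTneq eE0 => ->; rewrite mem_E0 eqxx andbF.
Qed.

Lemma Delta_del_in X : X \in Delta E -> (v, x) \in X -> (x, v) \notin X ->
  X :\ (v, x) \in Delta E0.
Proof.
move=> /DeltaP[XE fX] vxX xvX; apply/DeltaP; split; last by apply: dforestS fX; apply: subD1set.
apply/subsetP => e; rewrite in_setD1 => /andP[e_vx eX].
case/leaf_edgeP: (subsetP XE _ eX) => [eE'|evx|exv]; last 2 first.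
- by rewrite evx eqxx in e_vx.
- by rewrite -exv eX in xvX.
rewrite mem_E0 eE'; apply: contra e_vx => /eqP ex.
by rewrite (dforest_head_inj fX eX vxX).
Qed.

Lemma Delta_del_out X : X \in Delta E -> (v, x) \notin X -> X :\ (x, v) \in Delta E'.
Proof.
move=> /DeltaP[XE fX] vxX; apply/DeltaP; split; last by apply: dforestS fX; apply: subD1set.
apply/subsetP => e; rewrite in_setD1 => /andP[e_xv eX].
case/leaf_edgeP: (subsetP XE _ eX) => // [evx|exv]; first by rewrite -evx eX in vxX.
by rewrite exv eqxx in e_xv.
Qed.

Lemma Delta_E0 X : X \in Delta E' -> (forall e, e \in X -> e.2 != x) -> X \in Delta E0.
Proof.
move=> /DeltaP[XE' fX] X_x; apply/DeltaP; split => //; apply/subsetP => e eX.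
by rewrite mem_E0 (subsetP XE') ?X_x.
Qed.

Lemma Delta_del_side X y : X \in Delta E' -> (y, x) \in X -> X :\ (y, x) \in Delta (E0 :\ (x, y)).
Proof.
move=> XD yxX; have /DeltaP[_ fX] := XD; apply/DeltaP; split; last first.
  by apply: dforestS fX; apply: subD1set.
apply/subsetP => e; rewrite in_setD1 => /andP[e_yx eX]; rewrite in_setD1 mem_E0.
rewrite (Delta_mem XD eX) /=; apply/andP; split.
  by apply: contraTneq eX => ->; apply: contraL fX => /dforest_antisym; apply.
by apply: contra e_yx => /eqP ex; rewrite (dforest_head_inj fX eX yxX).
Qed.

Lemma Delta_del_vertex X : X \in Delta E -> (v, x) \notin X -> (x, v) \notin X -> X \in Delta E'.
Proof.
move=> XD vxX xvX; have := Delta_del_out XD vxX.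
by rewrite (setDidPl _) // disjoint_sym disjoints1.
Qed.

Lemma Delta_leaf_out : (v, x) \notin E ->
  Delta E = cone_union (Delta E') (x, v) [::] (fun y => (y, x)) (fun _ => set0).
Proof.
move=> vxE; have xvE : (x, v) \in E by move: v_adj; rewrite (negbTE vxE).
apply: eq_cone_union => [X XD|||//]; last 2 first.
- exact/subsetP/DeltaS/del_vertex_sub.
- by move=> a; apply: out_cone_Delta.
have vxX : (v, x) \notin X by apply: contra vxE => /(Delta_mem XD).
case: (boolP ((x, v) \in X)) => xvX; first by constructor 2; rewrite ?Delta_del_out.
by constructor 1; apply: Delta_del_vertex.
Qed.

Lemma Delta_leaf_in : (x, v) \notin E ->
  Delta E = cone_union (Delta E0) (v, x) ys (fun y => (y, x)) (fun y => Delta (E0 :\ (x, y))).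
Proof.
move=> xvE; have vxE : (v, x) \in E by move: v_adj; rewrite (negbTE xvE) orbF.
apply: eq_cone_union => [X XD|a|a|y b yys]; last 3 first.
- exact/subsetP/DeltaS/(subset_trans E0_sub del_vertex_sub).
- exact: in_cone_Delta.
- exact: side_cone_Delta.
have xvX : (x, v) \notin X by apply: contra xvE => /(Delta_mem XD).
case: (boolP ((v, x) \in X)) => vxX; first by constructor 2; rewrite ?Delta_del_in.
have XD' := Delta_del_vertex XD vxX xvX.
case: (boolP [exists e in X, e.2 == x]) => [/exists_inP[[y x'] yxX /= /eqP ex]|/exists_inPn X_x].
  subst x'; constructor 3; exists y; last by rewrite Delta_del_side.
  by rewrite ysP (Delta_mem XD' yxX).
by constructor 1; apply: Delta_E0 => // e /X_x.
Qed.

Lemma Delta_leaf_both : (x, v) \in E -> (v, x) \in E ->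
  Delta E = cone_union (Delta E') (x, v) [:: v] (fun y => (y, x)) (fun _ => Delta E0).
Proof.
move=> xvE vxE; apply: eq_cone_union => [X XD|a|a|y b /[1!inE] /eqP ->]; last 3 first.
- exact/subsetP/DeltaS/del_vertex_sub.
- exact: out_cone_Delta.
- exact: in_cone_Delta.
have /DeltaP[_ fX] := XD.
case: (boolP ((x, v) \in X)) => xvX.
  have vxX : (v, x) \notin X by apply: contraL fX => /(dforest_antisym xvX).
  by constructor 2; rewrite ?Delta_del_out.
case: (boolP ((v, x) \in X)) => vxX; last by constructor 1; apply: Delta_del_vertex.
by constructor 3; exists v; rewrite ?mem_seq1 //; split => //; apply: Delta_del_in.
Qed.

Lemma xv_notin_Delta' a : a \in Delta E' -> (x, v) \notin a.
Proof. by move=> aD; apply: contraTN (eqxx v) => /(Delta_mem aD)/del_vertex_head. Qed.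

Lemma vx_notin_Delta' a : a \in Delta E' -> (v, x) \notin a.
Proof. by move=> aD; apply: contraTN (eqxx v) => /(Delta_mem aD)/del_vertex_tail. Qed.

Lemma into_x_notin_Delta0 a y : a \in Delta E0 -> (y, x) \notin a.
Proof. by move=> aD; apply: contraTN (eqxx x) => /(Delta_mem aD)/E0_head. Qed.

Lemma into_x_inj : injective (fun y : V => (y, x)).
Proof. by move=> y y' []. Qed.

Lemma leaf_out_shelling_hT Fs : (v, x) \notin E -> shelling_order (Delta E') Fs ->
  shelling_order (Delta E) [seq F :|: [set (x, v)] | F <- Fs] /\
  forall i j : int, hT (Delta E) i j = hT (Delta E') (i - 1)%R j.
Proof.
move=> vxE Fs_sh; rewrite (Delta_leaf_out vxE).
have [] // := @cone_union_shelling_hT _ _ (Delta E') (x, v) [::] (fun y => (y, x))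
  (fun _ => set0) isT into_x_inj _ xv_notin_Delta' _ _ Fs (fun _ => [::]) Fs_sh.
move=> sh hT_eq; split; first by move: sh; rewrite /cone_union_shelling cats0.
by move=> i j; rewrite hT_eq big_nil addr0.
Qed.

Lemma leaf_in_shelling_hT Hs (G : V -> seq {set V * V}) : (x, v) \notin E ->
  shelling_order (Delta E0) Hs ->
  (forall y, y \in ys -> shelling_order (Delta (E0 :\ (x, y))) (G y)) ->
  shelling_order (Delta E)
    ([seq H :|: [set (v, x)] | H <- Hs] ++
     flatten [seq [seq Gp :|: [set (y, x)] | Gp <- G y] | y <- ys]) /\
  forall i j : int, hT (Delta E) i j =
    (hT (Delta E0) (i - 1) j + \sum_(y <- ys) hT (Delta (E0 :\ (x, y))) (i - 1) (j - 1))%R.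
Proof.
move=> xvE Hs_sh G_sh; rewrite (Delta_leaf_in xvE).
apply: cone_union_shelling_hT => //; first exact: into_x_inj.
- by move=> y; rewrite ysP => /del_vertex_tail; apply: contraNneq => -[->].
- by move=> a; apply: into_x_notin_Delta0.
- by move=> y a _; apply: into_x_notin_Delta0.
- by move=> y _; apply/DeltaS/subD1set.
Qed.

Lemma leaf_both_shelling_hT Fs Hs : (x, v) \in E -> (v, x) \in E ->
  shelling_order (Delta E') Fs -> shelling_order (Delta E0) Hs ->
  shelling_order (Delta E)
    ([seq F :|: [set (x, v)] | F <- Fs] ++ [seq H :|: [set (v, x)] | H <- Hs]) /\
  forall i j : int, hT (Delta E) i j = (hT (Delta E') (i - 1) j + hT (Delta E0) (i - 1) (j - 1))%R.
Proof.
move=> xvE vxE Fs_sh Hs_sh; rewrite (Delta_leaf_both xvE vxE).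
have [] // := @cone_union_shelling_hT _ _ (Delta E') (x, v) [:: v] (fun y => (y, x))
  (fun _ => Delta E0) isT into_x_inj _ xv_notin_Delta' _ _ Fs (fun _ => Hs) Fs_sh.
- by move=> y _; apply: contra x_neq_v => /eqP[_ ->].
- by move=> y a /[1!inE] /eqP ->; apply: vx_notin_Delta'.
- by move=> y _; apply/DeltaS/E0_sub.
move=> sh hT_eq; split.
  by move: sh; rewrite /cone_union_shelling /side_cones_shelling /= cats0.
by move=> i j; rewrite hT_eq big_seq1.
Qed.

End Leaf.

Theorem mainTheorem9 (V : finType) (W : {set V}) (E : {set V * V})
  (v x : V) (ys : seq V) (s : nat)
  (Fs Hs : seq {set V * V}) (G : V -> seq {set V * V}) :
  digraph W E -> ess_tree W E -> 2 <= #|W| ->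
  v \in W ->
  (forall e, e \in E -> (e.1 == v) || (e.2 == v) ->
     (e == (v, x)) || (e == (x, v))) ->
  ((v, x) \in E) || ((x, v) \in E) ->
  uniq ys ->
  (forall y, (y \in ys) = ((y, x) \in del_vertex E v)) ->
  s <= size ys ->
  (forall i, i < size ys -> ((x, nth x ys i) \in E) = (i < s)) ->
  let E' := del_vertex E v in
  let E0 := E' :\: [set (y, x) | y in ys] in
  shelling_order (Delta E') Fs ->
  shelling_order (Delta E0) Hs ->
  (forall y, y \in ys -> shelling_order (Delta (E0 :\ (x, y))) (G y)) ->
  [/\
   ((x, v) \in E -> (v, x) \notin E ->
      shelling_order (Delta E) [seq F :|: [set (x, v)] | F <- Fs] /\
      forall i j : int, hT (Delta E) i j = hT (Delta E') (i - 1)%R j),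
   ((x, v) \notin E -> (v, x) \in E ->
      shelling_order (Delta E)
        ([seq H :|: [set (v, x)] | H <- Hs] ++
         flatten [seq [seq Gp :|: [set (y, x)] | Gp <- G y] | y <- ys]) /\
      forall i j : int, hT (Delta E) i j =
        (hT (Delta E0) (i - 1) j +
         \sum_(y <- ys) hT (Delta (E0 :\ (x, y))) (i - 1) (j - 1))%R) &
   ((x, v) \in E -> (v, x) \in E ->
      shelling_order (Delta E)
        ([seq F :|: [set (x, v)] | F <- Fs] ++ [seq H :|: [set (v, x)] | H <- Hs]) /\
      forall i j : int, hT (Delta E) i j =
        (hT (Delta E') (i - 1) j + hT (Delta E0) (i - 1) (j - 1))%R)].
Proof.
move=> [_ no_loop] E_tree _ _ v_leaf v_adj ys_uniq ysP _ _ E' E0 Fs_sh Hs_sh G_sh.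
split=> [_ vxE|xvE _|xvE vxE].
- exact: leaf_out_shelling_hT.
- exact: (leaf_in_shelling_hT no_loop E_tree v_leaf v_adj ys_uniq ysP).
- exact: leaf_both_shelling_hT.
Qed.
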